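(* Let $v:\mathbb X\times\mathbb X\to[0,\infty]$ be a measurable symmetric pair potential, $z:\mathbb X\to[0,\infty)$ measurable with $\int_Bz\,d\lambda<\infty$ for all $B\in\mathcal X_{\mathsf b}$, and $\mathsf P\in\mathscr G(z)$. Let $h:\mathbb X\to[0,\infty)$ be measurable with $\int_{\mathbb X}h\,d\lambda_z<\infty$, and let $\mathsf P_h$ be the probability measure absolutely continuous with respect to $\mathsf P$ with $$\frac{d\mathsf P_h}{d\mathsf P}(\eta)=\frac{\exp(-\int_{\mathbb X}h\,d\eta)}{\int_{\mathcal N}\exp(-\int_{\mathbb X}h\,d\gamma)\,d\mathsf P(\gamma)}.$$ Then $\mathsf P_h\in\mathscr G(ze^{-h})$.
   Context: $(\mathbb X,\mathrm{dist})$ complete separable metric space with Borel $\sigma$-algebra $\mathcal X$, $\mathcal X_{\mathsf b}$ bounded Borel sets, $\lambda$ a measure finite on bounded sets, $\lambda_z(dx)=z(x)\lambda(dx)$. $\mathcal N$ is the set of locally finite counting measures on $\mathbb X$ with the $\sigma$-algebra $\mathfrak N$ generated by $\eta\mapsto\eta(B)$, $B\in\mathcal X_{\mathsf b}$. $W(x;\eta)=\int v(x,y)\,d\eta(y)$. For an activity $\zeta:\mathbb X\to[0,\infty)$, $\mathscr G(\zeta)$ is the set of probability measures $\mathsf Q$ on $(\mathcal N,\mathfrak N)$ with $\mathsf E_{\mathsf Q}[\int F(x,\eta)\,d\eta(x)]=\int\mathsf E_{\mathsf Q}[F(x,\eta+\delta_x)e^{-W(x;\eta)}]\zeta(x)\,d\lambda(x)$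 for all measurable $F:\mathbb X\times\mathcal N\to[0,\infty)$. *)

From HB Require Import structures.
From mathcomp Require Import all_boot all_order all_algebra.
From mathcomp Require Import all_classical all_reals all_analysis.
From mathcomp Require Import measurable_realfun.

Set Implicit Arguments.
Unset Strict Implicit.
Unset Printing Implicit Defensive.

Import Order.TTheory GRing.Theory Num.Theory.

Local Open Scope classical_set_scope.
Local Open Scope ring_scope.

Section metric_setting.
Context {d : measure_display} {X : measurableType d} {R : realType}.
Variable dist : X -> X -> R.

Definition dball (x : X) (r : R) : set X := [set y | dist x y < r].

Definition dopen (U : set X) : Prop :=
  forall x, U x -> exists2 e : R, 0 < e & dball x e `<=` U.

Definition complete_separable_borel : Prop :=
  (forall x y, dist x y = 0 <-> x = y) /\
  (forall x y, dist x y = dist y x) /\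
  (forall x y z, dist x z <= dist x y + dist y z) /\
  [/\
      (exists D : set X, countable D /\
          forall x (e : R), 0 < e -> exists2 y, D y & dist x y < e),
      (forall u : nat -> X,
          (forall e : R, 0 < e -> exists N, forall m n, (N <= m)%N -> (N <= n)%N ->
              dist (u m) (u n) < e) ->
          exists l, forall e : R, 0 < e -> exists N, forall n, (N <= n)%N ->
              dist (u n) l < e) &
      @measurable _ X = <<s dopen >> ].

Definition dbounded (B : set X) : Prop := exists (x : X) (r : R), B `<=` dball x r.

End metric_setting.

Section counting.
Local Open Scope ereal_scope.
Context {d : measure_display} {X : measurableType d} {R : realType}.
Variable dist : X -> X -> R.

Definition is_counting (mu : {measure set X -> \bar R}) : Prop :=
  forall A, measurable A -> mu A = +oo \/ exists n : nat, mu A = n%:R%:E.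

Definition is_locally_finite (mu : {measure set X -> \bar R}) : Prop :=
  forall B, measurable B -> dbounded dist B -> mu B < +oo.

Record lfcm := LFCM {
  lfcm_meas :> {measure set X -> \bar R} ;
  lfcm_count : is_counting lfcm_meas ;
  lfcm_locfin : is_locally_finite lfcm_meas }.

Lemma mzero_lfcm_count : is_counting (@mzero d X R).
Proof. by move=> A _; right; exists 0%N. Qed.

Lemma mzero_lfcm_locfin : is_locally_finite (@mzero d X R).
Proof. by move=> B _ _; rewrite /mzero ltry. Qed.

Definition lfcm0 : lfcm := LFCM mzero_lfcm_count mzero_lfcm_locfin.

HB.instance Definition _ := gen_eqMixin lfcm.
HB.instance Definition _ := gen_choiceMixin lfcm.
HB.instance Definition _ := isPointed.Build lfcm lfcm0.

Lemma addpt_count (eta : lfcm) (x : X) :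
  is_counting (measure_add eta (\d_x)%R).
Proof.
move=> A mA; rewrite /= /msum 2!big_ord_recl/= big_ord0 adde0.
case: (lfcm_count eta mA) => [Einf|[n En]].
  by left; rewrite Einf.
right; exists (n + (x \in A))%N; rewrite En /dirac indicE -EFinD natrD.
by case: (x \in A).
Qed.

Lemma addpt_locfin (eta : lfcm) (x : X) :
  is_locally_finite (measure_add eta (\d_x)%R).
Proof.
move=> B mB bB; rewrite /= /msum 2!big_ord_recl/= big_ord0 adde0 /dirac.
by apply: lte_add_pinfty; [exact: lfcm_locfin|rewrite ltry].
Qed.

Definition addpt (eta : lfcm) (x : X) : lfcm :=
  LFCM (addpt_count eta x) (addpt_locfin eta x).

Definition lfcm_ev (B : set X) (eta : lfcm) : \bar R := eta B.

Definition lfcm_measurable : set (set lfcm) :=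
  <<s \bigcup_(B in [set B | measurable B /\ dbounded dist B])
        preimage_set_system [set: lfcm] (lfcm_ev B) (@measurable _ (\bar R)) >>.

Definition lfcm_display : measure_display.
Proof. by constructor. Qed.

HB.instance Definition _ :=
  @isMeasurable.Build lfcm_display lfcm lfcm_measurable
    (@sigma_algebra0 _ setT _)
    (fun A (hA : lfcm_measurable A) =>
       eq_ind _ (fun S => lfcm_measurable S) (sigma_algebraCD hA) _ (setTD A))
    (@sigma_algebra_bigcup _ setT _).

End counting.

Section gibbs.
Local Open Scope ereal_scope.
Context {d : measure_display} {X : measurableType d} {R : realType}.

Definition Wpot (v : X -> X -> \bar R) (x : X) (eta : {measure set X -> \bar R}) : \bar R :=
  \int[eta]_y v x y.

(** G(zeta): probability measures Q on N satisfying the GNZ equation. *)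
Definition is_gibbs (dist : X -> X -> R) (lambda : {measure set X -> \bar R})
    (v : X -> X -> \bar R) (zeta : X -> R)
    (Q : probability (@lfcm d X R dist) R) : Prop :=
  forall F : X * lfcm dist -> \bar R,
    measurable_fun [set: X * lfcm dist] F -> (forall p, 0 <= F p) ->
    \int[Q]_eta (\int[lfcm_meas eta]_x F (x, eta)) =
    \int[lambda]_x ((\int[Q]_eta (F (x, addpt eta x) *
                                  expeR (- Wpot v x (lfcm_meas eta)))) * (zeta x)%:E).

End gibbs.

Arguments is_gibbs {d X R} dist lambda v zeta Q.

From HB Require Import structures.
From mathcomp Require Import all_boot all_order all_algebra.
From mathcomp Require Import all_classical all_reals all_analysis.
From mathcomp Require Import measurable_realfun.

Set Implicit Arguments.
Unset Strict Implicit.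
Unset Printing Implicit Defensive.

Import Order.TTheory GRing.Theory Num.Theory.
Local Open Scope classical_set_scope.
Local Open Scope ring_scope.
Local Open Scope ereal_scope.

(* P_h has density g(eta) = exp(-\int h deta) / c with respect to P, and
   adding a point multiplies it by a factor depending only on that point:
   g(eta + delta_x) = g(eta) exp(-h x).  Applying the GNZ equation of P to
   F(x, eta) g(eta) and changing measure back to P_h on both sides therefore
   gives the GNZ equation of P_h with activity z exp(-h).  The measurability
   side conditions are obtained by exhausting X with the balls of radius n,
   on each of which every locally finite configuration is finite. *)

Lemma measurable_expeR (R : realType) : measurable_fun [set: \bar R] expeR.
Proof.
rewrite (_ : expeR = fun x => if x \is a fin_num then (expR (fine x))%:E
                              else if x == +oo then +oo else 0); last first.
  by apply/funext => -[].
apply: measurable_fun_ifT.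
- exact/(measurable_fun_bool true)/(emeasurable_fin_num measurableT).
- exact/measurable_EFinP/measurableT_comp.
- apply: measurable_fun_ifT => //.
  apply: (measurable_fun_bool true).
  rewrite setTI (_ : _ @^-1` _ = [set +oo]) //.
  by apply/seteqP; split => x /= /eqP.
Qed.

Lemma measurable_expeRN d (T : measurableType d) (R : realType)
    (f : T -> \bar R) :
  measurable_fun [set: T] f -> measurable_fun [set: T] (fun t => expeR (- f t)).
Proof.
move=> mf; apply: measurableT_comp; first exact: measurable_expeR.
by apply: measurableT_comp mf; exact: oppe_measurable.
Qed.

Section density.
Context d (T : measurableType d) (R : realType).
Variables (nu : {finite_measure set T -> \bar R})
          (mu : {sigma_finite_measure set T -> \bar R}) (g : T -> \bar R).
Hypotheses (mg : measurable_fun [set: T] g) (g0 : forall t, 0 <= g t).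
Hypothesis nuE : forall A, measurable A -> nu A = \int[mu]_(t in A) g t.

Lemma integral_density (f : T -> \bar R) :
  measurable_fun [set: T] f -> (forall t, 0 <= f t) ->
  \int[nu]_t f t = \int[mu]_t (f t * g t).
Proof.
move=> mf f0.
have numu : nu `<< mu.
  apply/null_content_dominatesP => A mA muA0; rewrite nuE//.
  by apply: null_set_integral => //; exact: measurable_funS mg.
have gint : mu.-integrable [set: T] g.
  apply/integrableP; split => //.
  under eq_integral do rewrite gee0_abs//.
  by rewrite -nuE// fin_num_fun_lty.
(* The library's change of variables is stated for the Radon-Nikodym
   derivative, which agrees with g mu-a.e. *)
have dgE : ae_eq mu [set: T] (Radon_Nikodym_SigmaFinite.f nu mu) g.
  apply: integral_ae_eq => //.
    exact: Radon_Nikodym_SigmaFinite.f_integrable.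
  move=> E _ mE.
  by rewrite -nuE// -Radon_Nikodym_SigmaFinite.f_integral.
rewrite -(Radon_Nikodym_SigmaFinite.change_of_variables numu)//.
apply: ae_eq_integral => //; [apply: emeasurable_funM => //..|].
- exact: measurable_int (Radon_Nikodym_SigmaFinite.f_integrable numu).
- exact: ae_eqe_mul2l.
Qed.

End density.

Section exhaustion.
Context d (Y : measurableType d) (R : realType) (D : (set Y)^nat).
Hypotheses (mD : forall n, measurable (D n))
  (ndD : {homo D : n m / (n <= m)%N >-> n `<=` m})
  (DT : \bigcup_n D n = [set: Y]).

Lemma cvg_measure_exhaustion (mu : {measure set Y -> \bar R}) (A : set Y) :
  measurable A -> mu (A `&` D n) @[n --> \oo] --> mu A.
Proof.
move=> mA; have AE : \bigcup_n (A `&` D n) = A by rewrite -setI_bigcupr DT setIT.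
rewrite -[X in _ --> mu X]AE; apply: nondecreasing_cvg_mu.
- by move=> n; exact: measurableI.
- by rewrite AE.
- by move=> n m nm; apply/subsetPset; apply: setIS; exact: ndD.
Qed.

Context d' (T : measurableType d') (k : R.-ker T ~> Y).
Hypothesis kD_fin : forall t n, k t (D n) < +oo.

Lemma measurable_fun_kernel_xsection (A : set (T * Y)) : measurable A ->
  measurable_fun [set: T] (fun t => k t (xsection A t)).
Proof.
move=> mA.
apply: (emeasurable_fun_cvg (fun n t => mrestr (k t) (mD n) (xsection A t))).
  move=> n; apply: (measurable_prod_subset_xsection_kernel _ mA).2 => t.
  exists (fine (k t (D n)) + 1)%R => B mB; rewrite /mrestr.
  have kDn_fin : k t (D n) \is a fin_num by rewrite ge0_fin_numE.
  apply: (@le_lt_trans _ _ (k t (D n))).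
    by rewrite le_measure ?inE//; exact: measurableI.
  by rewrite -[X in X < _](fineK kDn_fin) lte_fin ltrDl.
by move=> t _; apply: cvg_measure_exhaustion; exact: measurable_xsection.
Qed.

Import HBNNSimple.

Lemma measurable_fun_integral_kernel_xsection (F : T * Y -> \bar R) :
  measurable_fun [set: T * Y] F -> (forall p, 0 <= F p) ->
  measurable_fun [set: T] (fun t => \int[k t]_y F (t, y)).
Proof.
move=> mF F0.
apply: (measurable_fun_xsection_integral _ _ (nnsfun_approx measurableT mF)).
- exact: nd_nnsfun_approx.
- by move=> p; apply: cvg_nnsfun_approx => // ? _; exact: F0.
- by move=> n r; exact: measurable_fun_kernel_xsection.
Qed.

End exhaustion.

Section lfcm_measurability.
Context d (X : measurableType d) (R : realType) (dist : X -> X -> R).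
Hypothesis hdist : complete_separable_borel dist.

Lemma measurable_dball (x : X) (r : R) : measurable (dball dist x r).
Proof.
case: hdist => _ [_ [tri [_ _ ->]]].
apply: sub_gen_smallest => y xy.
exists (r - dist x y)%R; first by rewrite subr_gt0.
by move=> w yw; rewrite /dball /= (le_lt_trans (tri x y w))// -ltrBrDl.
Qed.

Lemma dball_nat_homo (x : X) :
  {homo (fun n : nat => dball dist x n%:R) : n m / (n <= m)%N >-> n `<=` m}.
Proof. by move=> n m nm y /lt_le_trans; apply; rewrite ler_nat. Qed.

Lemma bigcup_dball_nat (x : X) : \bigcup_n dball dist x n%:R = [set: X].
Proof.
apply/seteqP; split => // y _.
by exists (Num.truncn (dist x y)).+1 => //; exact: truncnS_gt.
Qed.

Lemma measurable_lfcm_ev_bounded (B : set X) : measurable B -> dbounded dist B ->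
  measurable_fun [set: lfcm dist] (fun eta => lfcm_meas eta B).
Proof.
move=> mB bB _ Y mY; rewrite setTI; apply: sub_gen_smallest.
by exists B => //; exists Y => //; rewrite setTI.
Qed.

Lemma measurable_lfcm_ev (A : set X) : measurable A ->
  measurable_fun [set: lfcm dist] (fun eta => lfcm_meas eta A).
Proof.
move=> mA; have [->|/set0P[x Ax]] := eqVneq A set0.
  by under eq_fun do rewrite measure0; exact: measurable_cst.
apply: (emeasurable_fun_cvg
  (fun n eta => lfcm_meas eta (A `&` dball dist x n%:R))).
  move=> n; apply: measurable_lfcm_ev_bounded.
    exact/measurableI/measurable_dball.
  by exists x, n%:R => y [].
move=> eta _; apply: cvg_measure_exhaustion => //.
- by move=> n; exact: measurable_dball.
- exact: dball_nat_homo.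
- exact: bigcup_dball_nat.
Qed.

Definition lfcm_kernel (eta : lfcm dist) : {measure set X -> \bar R} :=
  lfcm_meas eta.

HB.instance Definition _ :=
  isKernel.Build _ _ _ _ R lfcm_kernel measurable_lfcm_ev.

Lemma measurable_fun_lfcm_integral (F : X * lfcm dist -> \bar R) :
  measurable_fun [set: X * lfcm dist] F -> (forall p, 0 <= F p) ->
  measurable_fun [set: lfcm dist] (fun eta => \int[lfcm_meas eta]_x F (x, eta)).
Proof.
move=> mF F0.
have [D [mD ndD DT Dfin]] : exists D : (set X)^nat,
    [/\ forall n, measurable (D n), {homo D : n m / (n <= m)%N >-> n `<=` m},
        \bigcup_n D n = [set: X] & forall (eta : lfcm dist) n, eta (D n) < +oo].
  have [XT|/eqP/set0P[x _]] := pselect ([set: X] = set0).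
    exists (fun=> set0); split => //.
    - by move=> ? ? _; exact: sub0set.
    - by apply/seteqP; split => // y; rewrite XT.
    - by move=> eta n; rewrite measure0.
  exists (fun n => dball dist x n%:R); split.
  - by move=> n; exact: measurable_dball.
  - exact: dball_nat_homo.
  - exact: bigcup_dball_nat.
  - by move=> eta n; apply: lfcm_locfin; [exact: measurable_dball|exists x, n%:R].
apply: (measurable_fun_integral_kernel_xsection mD ndD DT (k := lfcm_kernel) Dfin
  (F := F \o @unstable.swap _ _)) => //.
- by apply: measurableT_comp => //; exact: measurable_swap.
- by move=> p; exact: F0.
Qed.

Lemma measurable_addpt (x : X) :
  measurable_fun [set: lfcm dist] (fun eta => addpt eta x).
Proof.
apply: (measurability (\bigcup_(B in [set B | measurable B /\ dbounded dist B])
  preimage_set_system [set: lfcm dist] (lfcm_ev B) (@measurable _ (\bar R))));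
  first by [].
move=> _ [_ [B [mB bB] [Y mY <-]] <-].
have -> : [set: lfcm dist] `&` (fun eta : lfcm dist => addpt eta x) @^-1`
      ([set: lfcm dist] `&` lfcm_ev B @^-1` Y)
    = [set: lfcm dist] `&` (fun eta => lfcm_meas eta B + \d_x B) @^-1` Y.
  apply/seteqP; split => eta /=;
    rewrite /lfcm_ev /= /msum 2!big_ord_recl/= big_ord0 adde0.
  - by move=> [_ [_ ?]].
  - by move=> [_ ?].
by apply: emeasurable_funD => //; exact: measurable_lfcm_ev_bounded.
Qed.

End lfcm_measurability.

Lemma integral_addpt d (X : measurableType d) (R : realType) (dist : X -> X -> R)
    (eta : lfcm dist) (x : X) (f : X -> \bar R) :
  measurable_fun [set: X] f -> (forall y, 0 <= f y) ->
  \int[lfcm_meas (addpt eta x)]_y f y = \int[lfcm_meas eta]_y f y + f x.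
Proof.
move=> mf f0; rewrite [LHS]ge0_integral_measure_add// integral_dirac//.
by rewrite diracT mul1e.
Qed.

Section gibbs_tilting.
Context d (X : measurableType d) (R : realType) (dist : X -> X -> R).
Hypothesis hdist : complete_separable_borel dist.
Variables (lambda : {measure set X -> \bar R}) (v : X -> X -> \bar R).
Variables z k : X -> R.
Hypotheses (mv : measurable_fun [set: X * X] (fun p => v p.1 p.2))
  (v0 : forall x y, 0 <= v x y) (k0 : forall x, (0 <= k x)%R).
Variables (P Q : probability (lfcm dist) R) (g : lfcm dist -> \bar R).
Hypotheses (mg : measurable_fun [set: lfcm dist] g) (g0 : forall eta, 0 <= g eta)
  (QE : forall A, measurable A -> Q A = \int[P]_(eta in A) g eta)
  (g_addpt : forall eta x, g (addpt eta x) = g eta * (k x)%:E).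

Lemma measurable_boltzmann_factor (x : X) :
  measurable_fun [set: lfcm dist] (fun eta => expeR (- Wpot v x (lfcm_meas eta))).
Proof.
apply/measurable_expeRN.
apply: (measurable_fun_lfcm_integral hdist (F := fun p => v x p.1)) => //.
exact: measurableT_comp (measurableT_comp mv (pair1_measurable x)) measurable_fst.
Qed.

Lemma is_gibbs_tilt : is_gibbs dist lambda v z P ->
  is_gibbs dist lambda v (fun x => z x * k x)%R Q.
Proof.
move=> gibbsP F mF F0.
have mFg : measurable_fun [set: X * lfcm dist] (fun p => F p * g p.2).
  by apply: emeasurable_funM => //; exact: measurableT_comp mg measurable_snd.
rewrite (integral_density mg g0 QE); last 2 first.
- exact: measurable_fun_lfcm_integral.
- by move=> eta; exact: integral_ge0.
transitivity (\int[P]_eta \int[lfcm_meas eta]_x (F (x, eta) * g eta)).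
  apply: eq_integral => eta _; rewrite ge0_integralZr//.
  exact: measurableT_comp mF (pair2_measurable eta).
rewrite (gibbsP (fun p => F p * g p.2)) //; last by move=> p; rewrite mule_ge0.
apply: eq_integral => x _.
have mFx : measurable_fun [set: lfcm dist] (fun eta => F (x, addpt eta x)).
  apply: measurableT_comp mF _.
  by apply: measurable_fun_pair => //; exact: measurable_addpt.
rewrite (integral_density mg g0 QE); last 2 first.
- exact: emeasurable_funM mFx (measurable_boltzmann_factor x).
- by move=> eta; rewrite mule_ge0 ?expeR_ge0.
have tiltE eta :
    F (x, addpt eta x) * g (addpt eta x) * expeR (- Wpot v x (lfcm_meas eta))
    = F (x, addpt eta x) * expeR (- Wpot v x (lfcm_meas eta)) * g eta * (k x)%:E.
  by rewrite g_addpt -!muleA; congr (_ * _); rewrite [RHS]muleC -muleA.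
under eq_integral => eta _ do rewrite tiltE.
rewrite ge0_integralZr ?lee_fin//.
- by rewrite EFinM muleA muleAC.
- apply: emeasurable_funM => //.
  exact: emeasurable_funM mFx (measurable_boltzmann_factor x).
- by move=> eta _; rewrite !mule_ge0 ?expeR_ge0.
Qed.

End gibbs_tilting.

Theorem mainTheorem16 (d : measure_display) (X : measurableType d) (R : realType)
  (dist : X -> X -> R) (lambda : {measure set X -> \bar R})
  (v : X -> X -> \bar R) (z : X -> R) (h : X -> R)
  (P : probability (lfcm dist) R) (Ph : probability (lfcm dist) R) :
  complete_separable_borel dist ->
  (forall B, measurable B -> dbounded dist B -> lambda B < +oo) ->
  measurable_fun [set: X * X] (fun p => v p.1 p.2) ->
  (forall x y, 0 <= v x y) ->
  (forall x y, v x y = v y x) ->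
  measurable_fun [set: X] z ->
  (forall x, (0 <= z x)%R) ->
  (forall B, measurable B -> dbounded dist B ->
     \int[lambda]_(x in B) (z x)%:E < +oo) ->
  is_gibbs dist lambda v z P ->
  measurable_fun [set: X] h ->
  (forall x, (0 <= h x)%R) ->
  \int[lambda]_x ((h x)%:E * (z x)%:E) < +oo ->
  (forall A, measurable A ->
     Ph A = (\int[P]_(eta in A) expeR (- \int[lfcm_meas eta]_x (h x)%:E)) *
            ((fine (\int[P]_gamma expeR (- \int[lfcm_meas gamma]_x (h x)%:E)))^-1)%:E) ->
  is_gibbs dist lambda v (fun x => z x * expR (- h x))%R Ph.
Proof.
move=> hdist _ mv v0 _ _ _ _ gibbsP mh h0 _ PhE.
pose H (eta : lfcm dist) := \int[lfcm_meas eta]_x (h x)%:E.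
pose c := fine (\int[P]_gamma expeR (- H gamma)).
have mrho : measurable_fun [set: lfcm dist] (fun eta => expeR (- H eta)).
  apply/measurable_expeRN.
  apply: (measurable_fun_lfcm_integral hdist (F := EFin \o (h \o fst))).
  - exact/measurable_EFinP/measurableT_comp.
  - by move=> p; rewrite /= lee_fin.
have c0 : (0 <= c^-1)%R.
  by rewrite invr_ge0; apply/fine_ge0/integral_ge0 => eta _; exact: expeR_ge0.
have H_addpt eta x : H (addpt eta x) = H eta + (h x)%:E.
  by rewrite /H integral_addpt//; exact/measurable_EFinP.
apply: (is_gibbs_tilt hdist mv v0 (fun x => expR_ge0 (- h x))
  (P := P) (g := fun eta => expeR (- H eta) * c^-1%:E)) => //.
- exact: emeasurable_funM.
- by move=> eta; rewrite mule_ge0 ?expeR_ge0 ?lee_fin.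
- move=> A mA; rewrite PhE// ge0_integralZr ?lee_fin//.
  + exact: measurable_funTS.
  + by move=> eta _; exact: expeR_ge0.
- by move=> eta x; rewrite H_addpt oppeD ?fin_num_adde_defl// expeRD muleAC.
Qed.
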